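(* Assume (A1)–(A6) and (B1)–(B5). Let $y\in\mathbf K(\operatorname{dom}\mathcal R)$, let $\delta_n>0$ with $\delta_n\to0$, let $y_n\in\mathbb Y$ with $\mathcal D(y,y_n)\le\delta_n$, choose $\alpha_n>0$ with $\alpha_n\to0$ and $\delta_n/\alpha_n\to0$, and let $x_n\in\operatorname{arg\,min}\mathcal A_{\alpha_n,y_n}$. Then: (a) $(x_n)$ has at least one weakly convergent subsequence; (b) every weak accumulation point of $(x_n)$ is an $\mathcal R$-minimizing solution of $\mathbf Kx=y$; (c) for every weakly convergent subsequence $x_{\tau(n)}\rightharpoonup x_\star$ one has $\mathcal R(x_{\tau(n)})\to\mathcal R(x_\star)$; (d) if the $\mathcal R$-minimizing solution $x^\ddagger$ of $\mathbf Kx=y$ is unique, then $x_n\rightharpoonup x^\ddagger$.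
   Context: Standing assumptions (A1)–(A6): (A1) $\mathbb X,\mathbb Y$ real Hilbert spaces; (A2) $\Xi=\ell^2(\Lambda)$, $\Lambda$ countable; (A3) $\mathbf K\colon\mathbb X\to\mathbb Y$ weakly sequentially continuous; (A4) $\mathbf E\colon\mathbb X\to\Xi$ weakly sequentially continuous; (A5) $\mathbf D\colon\Xi\to\mathbb X$ weakly sequentially continuous; (A6) $\psi\colon\Xi\to[0,\infty]$ coercive (bounded values force bounded sequences) and weakly sequentially lower semicontinuous. Fix $c>0$ and set $\mathcal R(x)=\psi(\mathbf E(x))+\frac c2\|x-\mathbf D(\mathbf E(x))\|^2$, $\operatorname{dom}\mathcal R=\{x:\mathcal R(x)<\infty\}$, and $\mathcal A_{\alpha,y}(x)=\mathcal D(\mathbf Kx,y)+\alpha\mathcal R(x)$. An $\mathcal R$-minimizing solution of $\mathbf Kx=y$ is an element of $\operatorname{arg\,min}\{\mathcal R(x): x\in\operatorname{dom}\mathcal R,\ \mathbf Kx=y\}$. Similarity measure $\mathcal D\colon\mathbb Y\times\mathbb Y\to[0,\infty]$ with: (B1) $\mathcal D(y_0,y_1)=0\iff y_0=y_1$; (B2) sequential lower semicontinuity w.r.t. the weak topology in the first and the norm topology in the second argument; (B3) $\mathcal D(y,y_n)\to0\Rightarrow y_n\to y$; (B4) if $\mathcal D(y,y_n)\to0$ then $\mathcal D(z,y_n)\to\mathcal D(z,y)$ for every $z$ with $\mathcal D(z,y)<\infty$; (B5) for all $y$, $\alpha>0$ there is $x$ with $\mathcal A_{\alpha,y}(x)<\infty$.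 *)

From Stdlib Require Import Reals.
Open Scope R_scope.

Record Hilbert := {
  hcar :> Type;
  hzero : hcar;
  hadd : hcar -> hcar -> hcar;
  hopp : hcar -> hcar;
  hscal : R -> hcar -> hcar;
  hinner : hcar -> hcar -> R;
  hadd_assoc : forall x y z, hadd x (hadd y z) = hadd (hadd x y) z;
  hadd_comm : forall x y, hadd x y = hadd y x;
  hadd_zero : forall x, hadd hzero x = x;
  hadd_opp : forall x, hadd x (hopp x) = hzero;
  hscal_assoc : forall a b x, hscal a (hscal b x) = hscal (a * b) x;
  hscal_one : forall x, hscal 1 x = x;
  hscal_distr_r : forall a b x, hscal (a + b) x = hadd (hscal a x) (hscal b x);
  hscal_distr_l : forall a x y, hscal a (hadd x y) = hadd (hscal a x) (hscal a y);
  hinner_sym : forall x y, hinner x y = hinner y x;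
  hinner_add : forall x y z, hinner (hadd x y) z = hinner x z + hinner y z;
  hinner_scal : forall a x z, hinner (hscal a x) z = a * hinner x z;
  hinner_pos : forall x, 0 <= hinner x x;
  hinner_def : forall x, hinner x x = 0 -> x = hzero;
  hcomplete : forall u : nat -> hcar,
    (forall eps, eps > 0 -> exists N, forall m n, (N <= m)%nat -> (N <= n)%nat ->
        sqrt (hinner (hadd (u m) (hopp (u n))) (hadd (u m) (hopp (u n)))) < eps) ->
    exists l, Un_cv (fun n => sqrt (hinner (hadd (u n) (hopp l)) (hadd (u n) (hopp l)))) 0
}.

Arguments hzero {h}. Arguments hadd {h}. Arguments hopp {h}.
Arguments hscal {h}. Arguments hinner {h}.

Definition hsub {H : Hilbert} (x y : H) : H := hadd x (hopp y).
Definition hnorm {H : Hilbert} (x : H) : R := sqrt (hinner x x).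

Definition strong_cv {H : Hilbert} (u : nat -> H) (l : H) : Prop :=
  Un_cv (fun n => hnorm (hsub (u n) l)) 0.
Definition weak_cv {H : Hilbert} (u : nat -> H) (l : H) : Prop :=
  forall z : H, Un_cv (fun n => hinner (u n) z) (hinner l z).

Definition weak_seq_cont {H1 H2 : Hilbert} (F : H1 -> H2) : Prop :=
  forall (u : nat -> H1) (l : H1), weak_cv u l -> weak_cv (fun n => F (u n)) (F l).

Definition subseq_idx (tau : nat -> nat) : Prop := forall n, (tau n < tau (S n))%nat.

Definition eventually (P : nat -> Prop) : Prop := exists N, forall n, (N <= n)%nat -> P n.

(** ** Extended reals (we only use values in [0, +oo]) *)
Inductive ereal := Fin (r : R) | PInf.

Definition ele (a b : ereal) : Prop :=
  match a, b with
  | Fin x, Fin y => x <= y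
  | _, PInf => True
  | PInf, Fin _ => False
  end.
Definition elt (a b : ereal) : Prop :=
  match a, b with
  | Fin x, Fin y => x < y
  | Fin _, PInf => True
  | PInf, _ => False
  end.
Definition eadd (a b : ereal) : ereal :=
  match a, b with
  | Fin x, Fin y => Fin (x + y)
  | _, _ => PInf
  end.
(** scaling by a real number (used only with positive factors) *)
Definition escal (t : R) (a : ereal) : ereal :=
  match a with Fin x => Fin (t * x) | PInf => PInf end.

Definition efinite (a : ereal) : Prop := elt a PInf.
Definition enonneg (a : ereal) : Prop := ele (Fin 0) a.

Definition econv (u : nat -> ereal) (l : ereal) : Prop :=
  match l with
  | Fin r => forall eps, eps > 0 ->
       eventually (fun n => exists s, u n = Fin s /\ Rabs (s - r) < eps)
  | PInf => forall M : R, eventually (fun n => elt (Fin M) (u n))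
  end.

(** [ele a (liminf u)], written out: every real below [a] is eventually below [u n]. *)
Definition le_liminf (a : ereal) (u : nat -> ereal) : Prop :=
  forall r : R, elt (Fin r) a -> eventually (fun n => elt (Fin r) (u n)).

Definition coercive {H : Hilbert} (psi : H -> ereal) : Prop :=
  forall xi : nat -> H, (exists M, forall n, ele (psi (xi n)) (Fin M)) ->
    exists B, forall n, hnorm (xi n) <= B.
Definition weak_seq_lsc {H : Hilbert} (psi : H -> ereal) : Prop :=
  forall (u : nat -> H) (l : H), weak_cv u l -> le_liminf (psi l) (fun n => psi (u n)).

Definition Reg {X Xi : Hilbert} (E : X -> Xi) (Dd : Xi -> X) (psi : Xi -> ereal)
  (c : R) (x : X) : ereal :=
  eadd (psi (E x)) (Fin (c / 2 * (hnorm (hsub x (Dd (E x)))) ^ 2)).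

Definition Tik {X Y Xi : Hilbert} (K : X -> Y) (E : X -> Xi) (Dd : Xi -> X)
  (psi : Xi -> ereal) (c : R) (Dsim : Y -> Y -> ereal) (alpha : R) (y : Y) (x : X)
  : ereal :=
  eadd (Dsim (K x) y) (escal alpha (Reg E Dd psi c x)).

Definition Rmin_solution {X Y Xi : Hilbert} (K : X -> Y) (E : X -> Xi) (Dd : Xi -> X)
  (psi : Xi -> ereal) (c : R) (y : Y) (x : X) : Prop :=
  efinite (Reg E Dd psi c x) /\ K x = y /\
  forall z, efinite (Reg E Dd psi c z) -> K z = y ->
    ele (Reg E Dd psi c x) (Reg E Dd psi c z).

Definition sim_measure {X Y Xi : Hilbert} (K : X -> Y) (E : X -> Xi) (Dd : Xi -> X)
  (psi : Xi -> ereal) (c : R) (Dsim : Y -> Y -> ereal) : Prop :=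
  (forall y0 y1, enonneg (Dsim y0 y1))
  /\ (* B1 *) (forall y0 y1, Dsim y0 y1 = Fin 0 <-> y0 = y1)
  /\ (* B2 *) (forall (u v : nat -> Y) (a b : Y), weak_cv u a -> strong_cv v b ->
                 le_liminf (Dsim a b) (fun n => Dsim (u n) (v n)))
  /\ (* B3 *) (forall (y : Y) (v : nat -> Y), econv (fun n => Dsim y (v n)) (Fin 0) ->
                 strong_cv v y)
  /\ (* B4 *) (forall (y : Y) (v : nat -> Y), econv (fun n => Dsim y (v n)) (Fin 0) ->
                 forall z, efinite (Dsim z y) ->
                   econv (fun n => Dsim z (v n)) (Dsim z y))
  /\ (* B5 *) (forall (y : Y) (alpha : R), alpha > 0 ->
                 exists x, efinite (Tik K E Dd psi c Dsim alpha y x)).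

(** The only functional-analytic ingredient is the weak sequential compactness
    of bounded sequences in a Hilbert space, which we establish from scratch:
    Bolzano-Weierstrass and diagonal extraction make the inner products with a
    countable family converge, and a Riesz representation on the closed span of
    that family identifies the weak limit.  Next, (A4)-(A6) make [R] weakly
    lower semicontinuous with weakly compact sublevel sets.  Finally, comparing
    [x_n] with a solution [z] of [K z = y] gives
    [D(K x_n, y_n) + alpha_n R(x_n) <= delta_n + alpha_n R(z)]; this bounds
    [R(x_n)] (part (a)), forces weak limits to solve [K x = y] with minimal [R]
    (part (b)) and squeezes [R(x_n)] (part (c)); part (d) follows by the
    subsequence principle. *)

From Stdlib Require Import Reals Lra Lia Psatz ClassicalEpsilon Classical.
Open Scope R_scope.

Lemma subseq_mono (t : nat -> nat) :
  subseq_idx t -> forall m n, (m < n)%nat -> (t m < t n)%nat.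
Proof.
  intros Ht m n Hmn. induction Hmn as [|n _ IH].
  - apply Ht.
  - specialize (Ht n). lia.
Qed.

Lemma subseq_ge (t : nat -> nat) : subseq_idx t -> forall n, (n <= t n)%nat.
Proof. intros Ht n. induction n as [|n IH]; [lia|]. specialize (Ht n). lia. Qed.

Lemma subseq_comp (t s : nat -> nat) :
  subseq_idx t -> subseq_idx s -> subseq_idx (fun n => t (s n)).
Proof. intros Ht Hs n. apply subseq_mono; auto. Qed.

Lemma subseq_id : subseq_idx (fun n => n).
Proof. intro n; lia. Qed.

Lemma frequently_subseq (P : nat -> nat -> Prop) :
  (forall k N, exists n, (N <= n)%nat /\ P k n) ->
  exists tau, subseq_idx tau /\ forall k, P k (tau k).
Proof.
  intro HP.
  assert (G : forall k N, {n | (N <= n)%nat /\ P k n})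
    by (intros k N; apply constructive_indefinite_description, HP).
  set (tau := fix f (k : nat) : nat :=
         match k with O => proj1_sig (G O O) | S k' => proj1_sig (G (S k') (S (f k'))) end).
  exists tau. split.
  - intro n. exact (proj1 (proj2_sig (G (S n) (S (tau n))))).
  - intros [|k]; [exact (proj2 (proj2_sig (G O O)))|exact (proj2 (proj2_sig (G (S k) (S (tau k)))))].
Qed.

Lemma abs_lt_of_sq (a e : R) : 0 < e -> a * a < e * e -> Rabs a < e.
Proof.
  intros He Hsq. apply (Rsqr_lt_abs_0 a e) in Hsq. rewrite (Rabs_right e) in Hsq by lra. exact Hsq.
Qed.

Lemma cv_const (c : R) : Un_cv (fun _ => c) c.
Proof. intros e He; exists 0%nat; intros; unfold Rdist; rewrite Rminus_diag, Rabs_R0; lra. Qed.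

Lemma cv_ext (a b : nat -> R) l : (forall n, a n = b n) -> Un_cv a l -> Un_cv b l.
Proof. intros Eab Ha e He. destruct (Ha e He) as [N HN]. exists N. intros n Hn. rewrite <- Eab. auto. Qed.

Lemma Un_cv_subseq (a : nat -> R) (l : R) (t : nat -> nat) :
  subseq_idx t -> Un_cv a l -> Un_cv (fun n => a (t n)) l.
Proof.
  intros Ht Ha eps He. destruct (Ha eps He) as [N HN]. exists N. intros n Hn.
  apply HN. pose proof (subseq_ge t Ht n). lia.
Qed.

Lemma inv_succ_cv0 : Un_cv (fun n => / INR (S n)) 0.
Proof.
  apply (cv_ext (fun n => pos (RinvN n))); [intro n; simpl pos; now rewrite (S_INR n)| apply RinvN_cv].
Qed.

Lemma eventually_and (P Q : nat -> Prop) :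
  eventually P -> eventually Q -> eventually (fun n => P n /\ Q n).
Proof. intros [N1 H1] [N2 H2]. exists (max N1 N2). intros n Hn. split; [apply H1|apply H2]; lia. Qed.

Lemma cv_eventually_lt (u : nat -> R) l r : Un_cv u l -> l < r -> eventually (fun n => u n < r).
Proof.
  intros Hu Hl. destruct (Hu (r - l)) as [N HN]; [lra|]. exists N. intros n Hn.
  specialize (HN n Hn). unfold Rdist in HN. pose proof (Rle_abs (u n - l)). lra.
Qed.

Lemma cv_eventually_gt (u : nat -> R) l r : Un_cv u l -> r < l -> eventually (fun n => r < u n).
Proof.
  intros Hu Hl. destruct (Hu (l - r)) as [N HN]; [lra|]. exists N. intros n Hn.
  specialize (HN n Hn). unfold Rdist in HN. pose proof (Rle_abs (- (u n - l))) as Habs.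
  rewrite Rabs_Ropp in Habs. lra.
Qed.

Lemma cv_bounded_above (u : nat -> R) l : Un_cv u l -> exists B, forall n, u n <= B.
Proof.
  intro Hu. destruct (maj_by_pos u (exist _ l Hu)) as [B [_ HB]].
  exists B. intro n. pose proof (Rle_abs (u n)). pose proof (HB n). lra.
Qed.

Lemma bounded_cv_subseq (a : nat -> R) (C : R) :
  (forall n, Rabs (a n) <= C) -> exists s, subseq_idx s /\ exists L, Un_cv (fun n => a (s n)) L.
Proof.
  intros HC.
  destruct (Bolzano_Weierstrass a (fun c => -C <= c <= C) (compact_P3 (-C) C)) as [l Hl].
  { intro n. specialize (HC n). revert HC; unfold Rabs; destruct (Rcase_abs (a n)); lra. }
  destruct (frequently_subseq (fun k n => Rabs (a n - l) < / INR (S k))) as [s [Hs Hsl]].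
  { intros k N. assert (Hp : 0 < / INR (S k)) by (apply Rinv_0_lt_compat, lt_0_INR; lia).
    destruct (Hl (disc l (mkposreal _ Hp)) N) as [p [Hp1 Hp2]].
    - exists (mkposreal _ Hp). intros z Hz. exact Hz.
    - exists p. split; auto. }
  exists s. split; [exact Hs|]. exists l. intros eps He.
  destruct (inv_succ_cv0 eps He) as [N HN]. exists N. intros n Hn.
  specialize (HN n Hn). unfold Rdist in *. rewrite Rminus_0_r, Rabs_right in HN
    by (apply Rle_ge, Rlt_le, Rinv_0_lt_compat, lt_0_INR; lia).
  specialize (Hsl n). lra.
Qed.

Lemma subsubseq_cv (a : nat -> R) (L : R) :
  (forall tau, subseq_idx tau -> exists s, subseq_idx s /\ Un_cv (fun n => a (tau (s n))) L) ->
  Un_cv a L.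
Proof.
  intro Hsub. apply NNPP. intro Hn.
  apply not_all_ex_not in Hn as [eps Hn]. apply imply_to_and in Hn as [He Hn].
  destruct (frequently_subseq (fun _ n => ~ Rdist (a n) L < eps)) as [tau [Htau Hbad]].
  { intros _ N. apply NNPP. intro Hno. apply Hn. exists N. intros n HNn.
    apply NNPP. intro Hd. apply Hno. exists n. auto. }
  destruct (Hsub tau Htau) as [s [Hs Hcv]]. destruct (Hcv eps He) as [N HN].
  apply (Hbad (s N)), HN. lia.
Qed.

Lemma diagonal_subseq (phi : nat -> nat -> nat) :
  subseq_idx (phi O) ->
  (forall k, exists g, subseq_idx g /\ forall m, phi (S k) m = phi k (g m)) ->
  subseq_idx (fun n => phi n n) /\
  forall k n, (k <= n)%nat -> exists m, (n <= m)%nat /\ phi n n = phi k m.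
Proof.
  intros H0 Hstep.
  assert (Hfac : forall j k, exists g, subseq_idx g /\ forall m, phi (k + j)%nat m = phi k (g m)).
  { induction j as [|j IH]; intro k.
    - exists (fun n => n). split; [apply subseq_id|]. intro m. now rewrite Nat.add_0_r.
    - destruct (IH k) as [g [Hg Hgm]]. destruct (Hstep (k + j)%nat) as [h [Hh Hhm]].
      exists (fun n => g (h n)). split; [apply subseq_comp; auto|].
      intro m. rewrite Nat.add_succ_r, Hhm. apply Hgm. }
  assert (Hphi : forall k, subseq_idx (phi k)).
  { intro k. destruct (Hfac k O) as [g [Hg Hgm]]. intro n. simpl in Hgm.
    rewrite !Hgm. apply subseq_mono; [exact H0| apply Hg]. }
  split.
  - intro n. destruct (Hstep n) as [g [Hg Hgm]]. rewrite Hgm.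
    apply subseq_mono; [apply Hphi|]. pose proof (subseq_ge g Hg (S n)). lia.
  - intros k n Hkn. destruct (Hfac (n - k)%nat k) as [g [Hg Hgm]].
    exists (g n). split; [apply subseq_ge, Hg|].
    rewrite <- Hgm. f_equal. lia.
Qed.

Lemma diagonal_extraction (a : nat -> nat -> R) :
  (forall k, exists C, forall n, Rabs (a k n) <= C) ->
  exists s, subseq_idx s /\ forall k, exists L, Un_cv (fun n => a k (s n)) L.
Proof.
  intros Hb.
  assert (Pick : forall b : nat -> R, {t : nat -> nat | subseq_idx t /\
             ((exists C, forall n, Rabs (b n) <= C) -> exists L, Un_cv (fun n => b (t n)) L)}).
  { intro b. apply constructive_indefinite_description.
    destruct (classic (exists C, forall n, Rabs (b n) <= C)) as [[C HC]|HC].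
    - destruct (bounded_cv_subseq b C HC) as [t [Ht Hcv]]. exists t. auto.
    - exists (fun n => n). split; [apply subseq_id| tauto]. }
  set (phi := fix f (k : nat) : nat -> nat :=
         match k with
         | O => proj1_sig (Pick (a O))
         | S k' => fun n => f k' (proj1_sig (Pick (fun m => a (S k') (f k' m))) n)
         end).
  destruct (diagonal_subseq phi) as [Hdiag Htail].
  - exact (proj1 (proj2_sig (Pick (a O)))).
  - intro k. exists (proj1_sig (Pick (fun m => a (S k) (phi k m)))).
    split; [exact (proj1 (proj2_sig (Pick (fun m => a (S k) (phi k m)))))| reflexivity].
  - exists (fun n => phi n n). split; [exact Hdiag|]. intro k.
    assert (Hk : exists L, Un_cv (fun n => a k (phi k n)) L).
    { destruct k as [|k].
      - apply (proj2 (proj2_sig (Pick (a O)))), Hb.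
      - apply (proj2 (proj2_sig (Pick (fun m => a (S k) (phi k m))))).
        destruct (Hb (S k)) as [C HC]. exists C. intro; apply HC. }
    destruct Hk as [L HL]. exists L. intros eps He.
    destruct (HL eps He) as [N HN]. exists (N + k)%nat. intros n Hn.
    destruct (Htail k n) as [m [Hm ->]]; [lia|]. apply HN. lia.
Qed.

Arguments hadd_assoc {h}. Arguments hadd_comm {h}. Arguments hadd_zero {h}.
Arguments hadd_opp {h}. Arguments hscal_one {h}. Arguments hscal_distr_r {h}.
Arguments hinner_sym {h}. Arguments hinner_add {h}. Arguments hinner_scal {h}.
Arguments hinner_pos {h}. Arguments hinner_def {h}. Arguments hcomplete {h}.

Section HilbertAlgebra.
Context {H : Hilbert}.

Lemma hadd_cancel_l (a x y : H) : hadd a x = hadd a y -> x = y.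
Proof.
  intro Exy. assert (E2 : hadd (hopp a) (hadd a x) = hadd (hopp a) (hadd a y)) by now rewrite Exy.
  rewrite !hadd_assoc, (hadd_comm (hopp a) a), hadd_opp, !hadd_zero in E2. exact E2.
Qed.

Lemma hscal_zero (x : H) : hscal 0 x = hzero.
Proof.
  apply (hadd_cancel_l (hscal 0 x)).
  rewrite <- hscal_distr_r, Rplus_0_r, hadd_comm, hadd_zero. reflexivity.
Qed.

Lemma hopp_scal (x : H) : hopp x = hscal (-1) x.
Proof.
  apply (hadd_cancel_l x). rewrite hadd_opp. rewrite <- (hscal_one x) at 1.
  rewrite <- hscal_distr_r. replace (1 + -1) with 0 by ring. now rewrite hscal_zero.
Qed.

Lemma hinner_add_r (x y z : H) : hinner z (hadd x y) = hinner z x + hinner z y.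
Proof. rewrite !(hinner_sym z). apply hinner_add. Qed.
Lemma hinner_scal_r a (x z : H) : hinner z (hscal a x) = a * hinner z x.
Proof. rewrite !(hinner_sym z). apply hinner_scal. Qed.
Lemma hinner_opp (x z : H) : hinner (hopp x) z = - hinner x z.
Proof. rewrite hopp_scal, hinner_scal. ring. Qed.
Lemma hinner_opp_r (x z : H) : hinner z (hopp x) = - hinner z x.
Proof. rewrite !(hinner_sym z). apply hinner_opp. Qed.
Lemma hinner_zero (z : H) : hinner hzero z = 0.
Proof. rewrite <- (hscal_zero z), hinner_scal. ring. Qed.
Lemma hinner_zero_r (z : H) : hinner z hzero = 0.
Proof. rewrite hinner_sym. apply hinner_zero. Qed.
Lemma hinner_sub (x y z : H) : hinner (hsub x y) z = hinner x z - hinner y z.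
Proof. unfold hsub. rewrite hinner_add, hinner_opp. ring. Qed.
Lemma hinner_sub_r (x y z : H) : hinner z (hsub x y) = hinner z x - hinner z y.
Proof. rewrite !(hinner_sym z). apply hinner_sub. Qed.

(** The squared norm; working with it avoids square roots everywhere. *)
Definition nsq (x : H) : R := hinner x x.

Lemma nsq_pos (x : H) : 0 <= nsq x.
Proof. apply hinner_pos. Qed.

Lemma hnorm_sq (v : H) : hnorm v ^ 2 = nsq v.
Proof. apply pow2_sqrt, hinner_pos. Qed.

Lemma nsq_add (a b : H) : nsq (hadd a b) = nsq a + 2 * hinner a b + nsq b.
Proof. unfold nsq. rewrite hinner_add, !hinner_add_r, (hinner_sym b a). ring. Qed.
Lemma nsq_sub (a b : H) : nsq (hsub a b) = nsq a - 2 * hinner a b + nsq b.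
Proof. unfold nsq. rewrite !hinner_sub, !hinner_sub_r, (hinner_sym b a). ring. Qed.
Lemma nsq_scal t (a : H) : nsq (hscal t a) = t * t * nsq a.
Proof. unfold nsq. rewrite hinner_scal, hinner_scal_r. ring. Qed.
Lemma nsq_sub_sym (a b : H) : nsq (hsub a b) = nsq (hsub b a).
Proof. rewrite !nsq_sub, (hinner_sym b a). ring. Qed.

Lemma nsq_sub_eq0 (a b : H) : nsq (hsub a b) = 0 -> a = b.
Proof.
  intro E0. apply hinner_def in E0. unfold hsub in E0.
  apply (hadd_cancel_l (hopp b)). rewrite hadd_comm, E0, hadd_comm, hadd_opp. reflexivity.
Qed.

Lemma cauchy_schwarz (a b : H) : hinner a b * hinner a b <= nsq a * nsq b.
Proof.
  destruct (Req_dec (nsq b) 0) as [Eb|Eb].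
  - apply hinner_def in Eb. subst b. unfold nsq. rewrite !hinner_zero_r. lra.
  - assert (Hb : 0 < nsq b) by (pose proof (nsq_pos b); lra).
    pose proof (nsq_pos (hadd a (hscal (- hinner a b / nsq b) b))) as P.
    rewrite nsq_add, nsq_scal, hinner_scal_r in P.
    assert (Q : nsq a - hinner a b * hinner a b / nsq b >= 0).
    { replace (nsq a - hinner a b * hinner a b / nsq b) with
        (nsq a + 2 * (- hinner a b / nsq b * hinner a b)
           + - hinner a b / nsq b * (- hinner a b / nsq b) * nsq b) by (field; lra). lra. }
    apply Rge_le, Rminus_ge. replace (nsq a * nsq b - hinner a b * hinner a b) with
      ((nsq a - hinner a b * hinner a b / nsq b) * nsq b) by (field; lra).
    apply Rle_ge, Rmult_le_pos; lra.
Qed.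

Lemma inner_bound (a b : H) (B : R) : nsq a <= B -> hinner a b * hinner a b <= B * nsq b.
Proof. intro HB. pose proof (cauchy_schwarz a b). pose proof (nsq_pos b). nra. Qed.

Lemma nsq_add_le (a b : H) : nsq (hadd a b) <= 2 * nsq a + 2 * nsq b.
Proof. rewrite nsq_add. pose proof (nsq_pos (hsub a b)) as P. rewrite nsq_sub in P. lra. Qed.

Lemma nsq_triangle (a b c : H) : nsq (hsub a c) <= 2 * nsq (hsub a b) + 2 * nsq (hsub b c).
Proof.
  replace (hsub a c) with (hadd (hsub a b) (hsub b c)); [apply nsq_add_le|].
  unfold hsub. rewrite <- hadd_assoc, (hadd_assoc (hopp b)), (hadd_comm (hopp b) b), hadd_opp,
    hadd_zero. reflexivity.
Qed.

End HilbertAlgebra.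


(** Proves an identity between vector expressions built from [hadd], [hsub],
    [hopp], [hscal] and [hzero], by expanding [nsq (hsub a b)] into a ring
    expression in inner products of atoms which must vanish. *)
Ltac hilbert_eq :=
  apply nsq_sub_eq0; unfold nsq, hsub;
  repeat rewrite ?hinner_add, ?hinner_add_r, ?hinner_opp, ?hinner_opp_r,
    ?hinner_scal, ?hinner_scal_r, ?hinner_zero, ?hinner_zero_r;
  repeat match goal with
  | |- context [hinner ?x ?y] => match goal with
       | |- context [hinner y x] => tryif constr_eq x y then fail else rewrite (hinner_sym y x)
       end
  end; ring.

Definition scv {H : Hilbert} (u : nat -> H) (l : H) : Prop :=
  forall eps, eps > 0 -> exists N, forall n, (N <= n)%nat -> nsq (hsub (u n) l) < eps.

Lemma strong_cv_scv {H : Hilbert} (u : nat -> H) (l : H) : strong_cv u l -> scv u l.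
Proof.
  intros Hu eps He. destruct (Hu (sqrt eps)) as [N HN]; [apply sqrt_lt_R0; lra|].
  exists N. intros n Hn. specialize (HN n Hn). unfold Rdist, hnorm in HN.
  rewrite Rminus_0_r, Rabs_right in HN by (apply Rle_ge, sqrt_pos).
  apply sqrt_lt_0_alt. exact HN.
Qed.

Lemma complete_sq {H : Hilbert} (u : nat -> H) :
  (forall eps, eps > 0 -> exists N, forall m n, (N <= m)%nat -> (N <= n)%nat ->
     nsq (hsub (u m) (u n)) < eps) ->
  exists l, scv u l.
Proof.
  intro Hc. destruct (hcomplete u) as [l Hl].
  - intros eps He. destruct (Hc (eps * eps)) as [N HN]; [nra|]. exists N. intros m n Hm Hn.
    specialize (HN m n Hm Hn). rewrite <- (sqrt_square eps) by lra.
    apply sqrt_lt_1_alt. split; [apply hinner_pos| exact HN].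
  - exists l. exact (strong_cv_scv u l Hl).
Qed.

Lemma scv_inner {H : Hilbert} (v : nat -> H) (x z : H) :
  scv v x -> Un_cv (fun n => hinner (v n) z) (hinner x z).
Proof.
  intros Hx eps He. pose proof (nsq_pos z).
  destruct (Hx (eps * eps / (nsq z + 1))) as [N HN]; [apply Rdiv_lt_0_compat; nra|].
  exists N. intros n Hn. specialize (HN n Hn). unfold Rdist.
  pose proof (inner_bound (hsub (v n) x) z _ (Rlt_le _ _ HN)) as P.
  rewrite hinner_sub in P.
  apply abs_lt_of_sq; [lra|]. apply Rle_lt_trans with (1 := P).
  apply Rlt_le_trans with (eps * eps / (nsq z + 1) * (nsq z + 1)).
  - apply Rmult_lt_compat_l; [apply Rdiv_lt_0_compat; nra| lra].
  - right. field. lra.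
Qed.

Lemma nonneg_quadratic_linear_coef (G q : R) :
  0 <= q -> (forall t, 0 <= t * G + t * t * q / 2) -> G = 0.
Proof.
  intros Hq Ht. specialize (Ht (- G / (q + 1))).
  replace (- G / (q + 1) * G + - G / (q + 1) * (- G / (q + 1)) * q / 2)
    with (- (G * G) * ((q + 2) / (2 * (q + 1) * (q + 1)))) in Ht by (field; lra).
  assert (0 < (q + 2) / (2 * (q + 1) * (q + 1))) by (apply Rdiv_lt_0_compat; nra).
  destruct (Req_dec G 0) as [|HG]; [assumption|].
  pose proof (Rsqr_pos_lt G HG). unfold Rsqr in *. nra.
Qed.

(** ** Riesz representation on a closed subspace

    A bounded linear functional [F] on a closed subspace [M] is represented by
    some [x] in [M]: [x] is the minimizer of the energy [|v|^2/2 - F v] over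
    [M], obtained as the limit of a minimizing sequence. *)
Section RieszSubspace.
Context {H : Hilbert} (M : H -> Prop) (F : H -> R) (C : R).
Hypothesis M0 : M hzero.
Hypothesis Madd : forall a b, M a -> M b -> M (hadd a b).
Hypothesis Mscal : forall t a, M a -> M (hscal t a).
Hypothesis Mclosed : forall u l, (forall n, M (u n)) -> scv u l -> M l.
Hypothesis Fadd : forall a b, M a -> M b -> F (hadd a b) = F a + F b.
Hypothesis Fscal : forall t a, M a -> F (hscal t a) = t * F a.
Hypothesis C_nonneg : 0 <= C.
Hypothesis Fbounded : forall a, M a -> F a * F a <= C * nsq a.

Definition energy (v : H) : R := nsq v / 2 - F v.

(** Boundedness of [F] gives [F v <= (C + |v|^2) / 2], so the energy is bounded below. *)
Lemma energy_bounded_below v : M v -> - C / 2 <= energy v.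
Proof.
  intro Mv. specialize (Fbounded v Mv). pose proof (nsq_pos v). unfold energy.
  assert (F v <= (C + nsq v) / 2); [|lra].
  apply Rnot_lt_le. intro Hl. pose proof (Rle_0_sqr (C - nsq v)) as Sq. unfold Rsqr in Sq.
  assert ((C + nsq v) / 2 * ((C + nsq v) / 2) < F v * F v) by (apply Rmult_le_0_lt_compat; lra).
  nra.
Qed.

Lemma energy_minimizing_sequence :
  exists m v, (forall z, M z -> m <= energy z) /\ (forall n, M (v n)) /\
    (forall n, energy (v n) < m + / INR (S n)).
Proof.
  destruct (completeness (fun r => exists v, M v /\ r = - energy v)) as [s [Hub Hlub]].
  { exists (C / 2). intros r [v [Mv ->]]. specialize (energy_bounded_below v Mv). lra. }
  { exists (- energy hzero), hzero. split; auto. }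
  assert (Hlow : forall z, M z -> - s <= energy z).
  { intros z Mz. assert (Hz : - energy z <= s) by (apply Hub; exists z; auto). lra. }
  assert (Hnear : forall n, exists v, M v /\ energy v < - s + / INR (S n)).
  { intro n. apply NNPP. intro Hn.
    assert (Hpos : 0 < / INR (S n)) by (apply Rinv_0_lt_compat, lt_0_INR; lia).
    assert (Hs : s <= s - / INR (S n)); [|lra].
    apply Hlub. intros r [v [Mv ->]]. apply Rnot_lt_le. intro Hl. apply Hn. exists v. split; auto. lra. }
  destruct (choice _ Hnear) as [v Hv]. exists (- s), v.
  split; [exact Hlow|]. split; intro n; apply Hv.
Qed.

(** Parallelogram law: a minimizing sequence is a Cauchy sequence. *)
Lemma minimizing_sequence_cv (m : R) (v : nat -> H) :
  (forall z, M z -> m <= energy z) -> (forall n, M (v n)) ->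
  (forall n, energy (v n) < m + / INR (S n)) -> exists x, scv v x.
Proof.
  intros Hlow Mv Hv.
  assert (Hpar : forall a b, M a -> M b -> nsq (hsub a b) / 4 <= energy a + energy b - 2 * m).
  { intros a b Ma Mb. specialize (Hlow (hscal (/ 2) (hadd a b)) (Mscal _ _ (Madd _ _ Ma Mb))).
    unfold energy in *. rewrite Fscal, Fadd, nsq_scal, nsq_add in Hlow by auto.
    rewrite nsq_sub. lra. }
  apply complete_sq. intros eps He. destruct (inv_succ_cv0 (eps / 8)) as [N HN]; [lra|].
  exists N. intros p q Hp Hq. specialize (Hpar _ _ (Mv p) (Mv q)).
  pose proof (HN p Hp) as Hp'. pose proof (HN q Hq) as Hq'. unfold Rdist in Hp', Hq'.
  pose proof (Rle_abs (/ INR (S p) - 0)). pose proof (Rle_abs (/ INR (S q) - 0)).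
  pose proof (Hv p). pose proof (Hv q). lra.
Qed.

Lemma riesz_subspace : exists x, M x /\ forall z, M z -> hinner x z = F z.
Proof.
  destruct energy_minimizing_sequence as [m [v [Hlow [Mv Hv]]]].
  destruct (minimizing_sequence_cv m v Hlow Mv Hv) as [x Hx].
  assert (Mx : M x) by (apply (Mclosed v); auto).
  exists x. split; [exact Mx|]. intros z Mz.
  (* the energy along [v n + t z] stays above [m]: pass to the limit in [n] *)
  apply Rminus_diag_uniq, (nonneg_quadratic_linear_coef _ (nsq z) (nsq_pos z)). intro t.
  apply (Rle_cv_lim (Un := fun n => - / INR (S n))
                    (Vn := fun n => t * (hinner (v n) z - F z) + t * t * nsq z / 2)).
  - intro n. specialize (Hlow (hadd (v n) (hscal t z)) (Madd _ _ (Mv n) (Mscal _ _ Mz))).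
    specialize (Hv n). unfold energy in *.
    rewrite Fadd, Fscal, nsq_add, nsq_scal, hinner_scal_r in Hlow by auto. lra.
  - replace 0 with (- 0) by ring. apply CV_opp, inv_succ_cv0.
  - apply CV_plus; [|apply cv_const]. apply CV_mult; [apply cv_const|].
    apply CV_minus; [apply scv_inner, Hx| apply cv_const].
Qed.

End RieszSubspace.

(** ** Weak sequential compactness of bounded sequences *)

Inductive span {H : Hilbert} (u : nat -> H) : H -> Prop :=
| span_term k : span u (u k)
| span_zero : span u hzero
| span_add a b : span u a -> span u b -> span u (hadd a b)
| span_scal t a : span u a -> span u (hscal t a).

Definition closed_span {H : Hilbert} (u : nat -> H) (v : H) : Prop :=
  forall eps, eps > 0 -> exists s, span u s /\ nsq (hsub v s) < eps.

Section ClosedSpan.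
Context {H : Hilbert} (u : nat -> H).

Lemma span_closed_span s : span u s -> closed_span u s.
Proof.
  intros Hs eps He. exists s. split; [exact Hs|].
  replace (hsub s s) with (@hzero H) by hilbert_eq. unfold nsq. rewrite hinner_zero. lra.
Qed.

Lemma closed_span_add a b : closed_span u a -> closed_span u b -> closed_span u (hadd a b).
Proof.
  intros Ha Hb eps He. destruct (Ha (eps / 4)) as [s [Hs1 Hs2]]; [lra|].
  destruct (Hb (eps / 4)) as [t [Ht1 Ht2]]; [lra|].
  exists (hadd s t). split; [constructor; auto|].
  replace (hsub (hadd a b) (hadd s t)) with (hadd (hsub a s) (hsub b t)) by hilbert_eq.
  pose proof (nsq_add_le (hsub a s) (hsub b t)). lra.
Qed.

Lemma closed_span_scal t a : closed_span u a -> closed_span u (hscal t a).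
Proof.
  intros Ha eps He. destruct (Ha (eps / (t * t + 1))) as [s [Hs1 Hs2]].
  { apply Rdiv_lt_0_compat; nra. }
  exists (hscal t s). split; [constructor; auto|].
  replace (hsub (hscal t a) (hscal t s)) with (hscal t (hsub a s)) by hilbert_eq.
  rewrite nsq_scal. assert (Hk : eps / (t * t + 1) * (t * t + 1) = eps) by (field; nra).
  pose proof (nsq_pos (hsub a s)). nra.
Qed.

Lemma closed_span_closed v l : (forall n, closed_span u (v n)) -> scv v l -> closed_span u l.
Proof.
  intros Hv Hvl eps He. destruct (Hvl (eps / 4)) as [N HN]; [lra|].
  destruct (Hv N (eps / 4)) as [s [Hs1 Hs2]]; [lra|]. exists s. split; [exact Hs1|].
  pose proof (nsq_triangle l (v N) s). rewrite (nsq_sub_sym l (v N)) in *.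
  specialize (HN N (le_n _)). lra.
Qed.

Lemma inner_cv_closed_span (w : nat -> H) (B : R) :
  (forall n, nsq (w n) <= B) ->
  (forall k, exists L, Un_cv (fun n => hinner (w n) (u k)) L) ->
  forall v, closed_span u v -> exists L, Un_cv (fun n => hinner (w n) v) L.
Proof.
  intros Hw Hcv.
  assert (B0 : 0 <= B) by (pose proof (nsq_pos (w O)); specialize (Hw O); lra).
  assert (Hspan : forall s, span u s -> exists L, Un_cv (fun n => hinner (w n) s) L).
  { induction 1 as [k| |a b _ [L1 H1] _ [L2 H2]|t a _ [L HL]].
    - apply Hcv.
    - exists 0. apply (cv_ext (fun _ => 0)); [intro; symmetry; apply hinner_zero_r| apply cv_const].
    - exists (L1 + L2). apply (cv_ext (fun n => hinner (w n) a + hinner (w n) b));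
        [intro; symmetry; apply hinner_add_r| apply CV_plus; auto].
    - exists (t * L). apply (cv_ext (fun n => t * hinner (w n) a));
        [intro; symmetry; apply hinner_scal_r| apply CV_mult; auto; apply cv_const]. }
  intros v Hv. cut (Cauchy_crit (fun n => hinner (w n) v)).
  { intro Hc. destruct (R_complete _ Hc) as [L HL]. exists L; exact HL. }
  intros eps He. destruct (Hv (eps * eps / (9 * (B + 1)))) as [s [Hs Hvs]].
  { apply Rdiv_lt_0_compat; nra. }
  destruct (Hspan s Hs) as [L HL].
  destruct (CV_Cauchy _ (exist _ L HL) (eps / 3)) as [N HN]; [lra|].
  (* [v] is uniformly close to [s] when tested against the bounded [w n] *)
  assert (Hclose : forall k, Rabs (hinner (w k) v - hinner (w k) s) < eps / 3).
  { intro k. rewrite <- hinner_sub_r, (hinner_sym (w k)).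
    apply abs_lt_of_sq; [lra|].
    pose proof (inner_bound (hsub v s) (w k) _ (Rlt_le _ _ Hvs)) as P.
    apply Rle_lt_trans with (1 := P). pose proof (Hw k). pose proof (nsq_pos (w k)).
    assert (Hd : 0 < eps * eps / (9 * (B + 1))) by (apply Rdiv_lt_0_compat; nra).
    apply Rlt_le_trans with (eps * eps / (9 * (B + 1)) * (B + 1)).
    - apply Rmult_lt_compat_l; [exact Hd| lra].
    - right. field. lra. }
  exists N. intros n m Hn Hm. specialize (HN n m Hn Hm). unfold Rdist in *.
  pose proof (Hclose n). pose proof (Hclose m).
  replace (hinner (w n) v - hinner (w m) v) with
    ((hinner (w n) v - hinner (w n) s) + (hinner (w n) s - hinner (w m) s)
       - (hinner (w m) v - hinner (w m) s)) by ring.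
  eapply Rle_lt_trans; [apply Rabs_triang|]. rewrite Rabs_Ropp.
  eapply Rle_lt_trans; [apply Rplus_le_compat_r, Rabs_triang|]. lra.
Qed.

End ClosedSpan.

(** Diagonal extraction makes [(w n | u k)] converge for every
    [k]; the limit is a bounded linear functional on the closed span [M] of
    [u], represented by some [x] in [M] (Riesz); finally an arbitrary [z] is
    replaced by its projection onto [M], again given by Riesz. *)
Theorem weak_compact {H : Hilbert} (u : nat -> H) (B : R) :
  (forall n, nsq (u n) <= B) ->
  exists s xs, subseq_idx s /\ weak_cv (fun n => u (s n)) xs.
Proof.
  intro HB.
  destruct (diagonal_extraction (fun k n => hinner (u n) (u k))) as [s [Hs Hcv]].
  { intro k. exists (Rabs B). intro n. apply Rsqr_le_abs_0. unfold Rsqr.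
    pose proof (inner_bound (u n) (u k) B (HB n)). pose proof (nsq_pos (u k)).
    specialize (HB k). nra. }
  set (w := fun n => u (s n)).
  assert (Hw : forall n, nsq (w n) <= B) by (intro; apply HB).
  set (M := closed_span u).
  pose proof (inner_cv_closed_span u w B Hw Hcv) as Mcv.
  destruct (choice (fun v L => M v -> Un_cv (fun n => hinner (w n) v) L)) as [F HF].
  { intro v. destruct (classic (M v)) as [Mv|Mv].
    - destruct (Mcv v Mv) as [L HL]. exists L. auto.
    - exists 0. tauto. }
  assert (M0 : M hzero) by (apply span_closed_span; constructor).
  pose proof (closed_span_add u) as Madd. pose proof (closed_span_scal u) as Mscal.
  pose proof (closed_span_closed u) as Mclosed.
  destruct (riesz_subspace M F B M0 Madd Mscal Mclosed) as [x [Mx Hx]].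
  { intros a b Ma Mb. apply (UL_sequence (fun n => hinner (w n) (hadd a b))); [apply HF, Madd; auto|].
    apply (cv_ext (fun n => hinner (w n) a + hinner (w n) b));
      [intro; symmetry; apply hinner_add_r| apply CV_plus; auto]. }
  { intros t a Ma. apply (UL_sequence (fun n => hinner (w n) (hscal t a))); [apply HF, Mscal; auto|].
    apply (cv_ext (fun n => t * hinner (w n) a));
      [intro; symmetry; apply hinner_scal_r| apply CV_mult; auto; apply cv_const]. }
  { pose proof (nsq_pos (u O)). specialize (HB O). lra. }
  { intros a Ma. apply (Rle_cv_lim (Un := fun n => hinner (w n) a * hinner (w n) a)
                                   (Vn := fun _ => B * nsq a)).
    - intro n. apply inner_bound, Hw.
    - apply CV_mult; auto.
    - apply cv_const. }
  exists s, x. split; [exact Hs|]. intro z.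
  destruct (riesz_subspace M (hinner z) (nsq z) M0 Madd Mscal Mclosed) as [p [Mp Hp]].
  { intros; apply hinner_add_r. }
  { intros; apply hinner_scal_r. }
  { apply nsq_pos. }
  { intros a _. apply cauchy_schwarz. }
  (* [p] is the projection of [z] onto [M]: it has the same inner products with [M] *)
  assert (Ew : forall n, hinner (w n) p = hinner (u (s n)) z).
  { intro n. rewrite hinner_sym, Hp by exact (span_closed_span u _ (span_term u (s n))). apply hinner_sym. }
  apply (cv_ext _ _ _ Ew).
  replace (hinner x z) with (F p) by (rewrite <- (Hx p Mp), hinner_sym, (Hp x Mx); apply hinner_sym).
  apply HF, Mp.
Qed.

Section WeakConvergence.
Context {H : Hilbert}.

Lemma weak_cv_ext (a b : nat -> H) l : (forall n, a n = b n) -> weak_cv a l -> weak_cv b l.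
Proof. intros Eab Ha z. apply (cv_ext (fun n => hinner (a n) z)); [intro n; now rewrite Eab| apply Ha]. Qed.

Lemma weak_cv_add (a b : nat -> H) la lb :
  weak_cv a la -> weak_cv b lb -> weak_cv (fun n => hadd (a n) (b n)) (hadd la lb).
Proof.
  intros Ha Hb z. rewrite hinner_add.
  apply (cv_ext (fun n => hinner (a n) z + hinner (b n) z));
    [intro; symmetry; apply hinner_add| apply CV_plus; auto].
Qed.

Lemma weak_cv_sub (a b : nat -> H) la lb :
  weak_cv a la -> weak_cv b lb -> weak_cv (fun n => hsub (a n) (b n)) (hsub la lb).
Proof.
  intros Ha Hb z. rewrite hinner_sub.
  apply (cv_ext (fun n => hinner (a n) z - hinner (b n) z));
    [intro; symmetry; apply hinner_sub| apply CV_minus; auto].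
Qed.

Lemma weak_cv_subseq (a : nat -> H) l t :
  subseq_idx t -> weak_cv a l -> weak_cv (fun n => a (t n)) l.
Proof. intros Ht Ha z. apply (Un_cv_subseq (fun n => hinner (a n) z)); auto. Qed.

Lemma weak_cv_subsubseq (a : nat -> H) l :
  (forall tau, subseq_idx tau -> exists s, subseq_idx s /\ weak_cv (fun n => a (tau (s n))) l) ->
  weak_cv a l.
Proof.
  intros Hsub z. apply subsubseq_cv. intros tau Htau.
  destruct (Hsub tau Htau) as [s [Hs Hw]]. exists s. split; auto.
Qed.

Lemma nsq_weak_lsc (a : nat -> H) b r :
  weak_cv a b -> r < nsq b -> eventually (fun n => r < nsq (a n)).
Proof.
  intros Ha Hr.
  assert (Hc : Un_cv (fun n => 2 * hinner (a n) b - nsq b) (2 * nsq b - nsq b))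
    by (apply CV_minus; [apply CV_mult; [apply cv_const| apply Ha]| apply cv_const]).
  destruct (cv_eventually_gt _ _ r Hc) as [N HN]; [lra|]. exists N. intros n Hn.
  specialize (HN n Hn). pose proof (nsq_pos (hsub (a n) b)) as Hd. rewrite nsq_sub in Hd. lra.
Qed.

End WeakConvergence.

Lemma not_ele_elt (a b : ereal) : ~ ele a b -> elt b a.
Proof. destruct a, b; simpl; try tauto. intro; lra. Qed.

Lemma le_liminf_ext (a : ereal) (u v : nat -> ereal) :
  (forall n, u n = v n) -> le_liminf a u -> le_liminf a v.
Proof. intros Euv Hu r Hr. destruct (Hu r Hr) as [N HN]. exists N. intros n Hn. rewrite <- Euv. auto. Qed.

Lemma le_liminf_add (a : ereal) (u : nat -> ereal) (b : R) (v : nat -> R) :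
  le_liminf a u -> (forall r, r < b -> eventually (fun n => r < v n)) ->
  le_liminf (eadd a (Fin b)) (fun n => eadd (u n) (Fin (v n))).
Proof.
  intros Hu Hv r Hr. destruct a as [a|].
  - simpl in Hr. set (h := (a + b - r) / 2).
    destruct (eventually_and _ _ (Hu (a - h) ltac:(simpl; unfold h; lra))
                (Hv (b - h) ltac:(unfold h; lra))) as [N HN].
    exists N. intros n Hn. destruct (HN n Hn) as [H1 H2].
    destruct (u n); simpl in *; auto. unfold h in *; lra.
  - destruct (eventually_and _ _ (Hu (r - b + 1) I) (Hv (b - 1) ltac:(lra))) as [N HN].
    exists N. intros n Hn. destruct (HN n Hn) as [H1 H2]. destruct (u n); simpl in *; auto. lra.
Qed.

Section Regularizer.
Context {X Xi : Hilbert} (E : X -> Xi) (Dd : Xi -> X) (psi : Xi -> ereal) (c : R).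
Hypothesis HE : weak_seq_cont E.
Hypothesis HD : weak_seq_cont Dd.
Hypothesis Hpsi_nonneg : forall xi, enonneg (psi xi).
Hypothesis Hpsi_coer : coercive psi.
Hypothesis Hpsi_lsc : weak_seq_lsc psi.
Hypothesis Hc : c > 0.

Lemma reg_split z :
  Reg E Dd psi c z = eadd (psi (E z)) (Fin (c / 2 * nsq (hsub z (Dd (E z))))).
Proof. unfold Reg. now rewrite hnorm_sq. Qed.

Lemma reg_nonneg z : enonneg (Reg E Dd psi c z).
Proof.
  rewrite reg_split. pose proof (Hpsi_nonneg (E z)).
  assert (0 <= c / 2 * nsq (hsub z (Dd (E z)))) by (apply Rmult_le_pos; [lra| apply nsq_pos]).
  destruct (psi (E z)); cbn [enonneg ele eadd] in *; auto. lra.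
Qed.

Lemma reg_weak_lsc (v : nat -> X) l :
  weak_cv v l -> le_liminf (Reg E Dd psi c l) (fun n => Reg E Dd psi c (v n)).
Proof.
  intro Hv. apply (le_liminf_ext _ (fun n => eadd (psi (E (v n)))
                                   (Fin (c / 2 * nsq (hsub (v n) (Dd (E (v n)))))))).
  { intro n. symmetry. apply reg_split. }
  rewrite reg_split. apply le_liminf_add; [apply (Hpsi_lsc (fun n => E (v n))), HE, Hv|].
  intros r Hr.
  destruct (nsq_weak_lsc (fun n => hsub (v n) (Dd (E (v n)))) (hsub l (Dd (E l))) (r / (c / 2)))
    as [N HN].
  - apply weak_cv_sub; [exact Hv|]. apply (HD (fun n => E (v n))), HE, Hv.
  - apply Rmult_lt_reg_l with (c / 2); [lra|].
    replace (c / 2 * (r / (c / 2))) with r by (field; lra). exact Hr.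
  - exists N. intros n Hn. specialize (HN n Hn).
    replace r with (c / 2 * (r / (c / 2))) by (field; lra). apply Rmult_lt_compat_l; lra.
Qed.

(** The sublevel sets of the regularizer are weakly sequentially compact:
    coercivity bounds [E x], the penalty term bounds [x - D (E x)], and
    [x = (x - D (E x)) + D (E x)]. *)
Lemma reg_bounded_weak_subseq (v : nat -> X) (M : R) :
  (forall n, ele (Reg E Dd psi c (v n)) (Fin M)) ->
  exists s xs, subseq_idx s /\ weak_cv (fun n => v (s n)) xs.
Proof.
  intro HM.
  assert (Hparts : forall n, exists p, psi (E (v n)) = Fin p /\ 0 <= p /\
            p + c / 2 * nsq (hsub (v n) (Dd (E (v n)))) <= M).
  { intro n. specialize (HM n). rewrite reg_split in HM. pose proof (Hpsi_nonneg (E (v n))).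
    destruct (psi (E (v n))) as [p|]; simpl in *; [|contradiction]. exists p. auto. }
  assert (Hpen : forall n, 0 <= c / 2 * nsq (hsub (v n) (Dd (E (v n)))))
    by (intro; apply Rmult_le_pos; [lra| apply nsq_pos]).
  destruct (Hpsi_coer (fun n => E (v n))) as [BE HBE].
  { exists M. intro n. destruct (Hparts n) as [p [-> [Hp Hpb]]]. simpl. specialize (Hpen n). lra. }
  destruct (weak_compact (fun n => E (v n)) (BE * BE)) as [s1 [xi [Hs1 Hxi]]].
  { intro n. rewrite <- hnorm_sq. specialize (HBE n).
    pose proof (sqrt_pos (hinner (E (v n)) (E (v n)))). unfold hnorm in *. simpl. nra. }
  destruct (weak_compact (fun n => hsub (v (s1 n)) (Dd (E (v (s1 n))))) (2 * M / c))
    as [s2 [w [Hs2 Hw]]].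
  { intro n. destruct (Hparts (s1 n)) as [p [_ [Hp Hpb]]].
    apply Rmult_le_reg_l with (c / 2); [lra|].
    replace (c / 2 * (2 * M / c)) with M by (field; lra). lra. }
  exists (fun n => s1 (s2 n)), (hadd w (Dd xi)). split; [apply subseq_comp; auto|].
  apply (weak_cv_ext (fun n => hadd (hsub (v (s1 (s2 n))) (Dd (E (v (s1 (s2 n))))))
                                    (Dd (E (v (s1 (s2 n))))))).
  { intro n. hilbert_eq. }
  apply weak_cv_add; [exact Hw|].
  apply (HD (fun n => E (v (s1 (s2 n))))), (weak_cv_subseq (fun n => E (v (s1 n)))); auto.
Qed.

End Regularizer.

(** ** Convergence of the Tikhonov minimizers *)
Section TikhonovConvergence.
Context {X Y Xi : Hilbert} (K : X -> Y) (E : X -> Xi) (Dd : Xi -> X) (psi : Xi -> ereal)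
  (c : R) (Dsim : Y -> Y -> ereal).
Hypothesis HK : weak_seq_cont K.
Hypothesis HE : weak_seq_cont E.
Hypothesis HD : weak_seq_cont Dd.
Hypothesis Hpsi_nonneg : forall xi, enonneg (psi xi).
Hypothesis Hpsi_coer : coercive psi.
Hypothesis Hpsi_lsc : weak_seq_lsc psi.
Hypothesis Hc : c > 0.
Hypothesis Dnn : forall y0 y1, enonneg (Dsim y0 y1).
Hypothesis B1 : forall y0 y1, Dsim y0 y1 = Fin 0 <-> y0 = y1.
Hypothesis B2 : forall (u v : nat -> Y) (a b : Y), weak_cv u a -> strong_cv v b ->
  le_liminf (Dsim a b) (fun n => Dsim (u n) (v n)).
Hypothesis B3 : forall (y : Y) (v : nat -> Y), econv (fun n => Dsim y (v n)) (Fin 0) ->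
  strong_cv v y.

Variables (y : Y) (delta alpha : nat -> R) (yn : nat -> Y) (x : nat -> X).
Hypothesis Hdpos : forall n, delta n > 0.
Hypothesis Hdcv : Un_cv delta 0.
Hypothesis Hyn : forall n, ele (Dsim y (yn n)) (Fin (delta n)).
Hypothesis Hapos : forall n, alpha n > 0.
Hypothesis Hacv : Un_cv alpha 0.
Hypothesis Hda : Un_cv (fun n => delta n / alpha n) 0.
Hypothesis Hx : forall n z, ele (Tik K E Dd psi c Dsim (alpha n) (yn n) (x n))
                                (Tik K E Dd psi c Dsim (alpha n) (yn n) z).

Notation Rg := (Reg E Dd psi c).

Lemma tikhonov_comparison n z r : Rg z = Fin r -> K z = y ->
  exists d q, Dsim (K (x n)) (yn n) = Fin d /\ Rg (x n) = Fin q /\ 0 <= d /\ 0 <= q /\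
    d + alpha n * q <= delta n + alpha n * r.
Proof.
  intros Hr Hz. pose proof (Hx n z) as Hxz. unfold Tik in Hxz. rewrite Hr, Hz in Hxz.
  pose proof (Hyn n) as Hy1. pose proof (Dnn (K (x n)) (yn n)) as Hd0.
  pose proof (reg_nonneg E Dd psi c Hpsi_nonneg Hc (x n)) as Hq0. pose proof (Dnn y (yn n)).
  destruct (Dsim y (yn n)) as [e|]; [|contradiction].
  destruct (Dsim (K (x n)) (yn n)) as [d|]; destruct (Rg (x n)) as [q|];
    simpl in *; try contradiction.
  exists d, q. repeat split; auto. lra.
Qed.

Lemma reg_iterate_bound n z r : Rg z = Fin r -> K z = y ->
  exists q, Rg (x n) = Fin q /\ q <= delta n / alpha n + r.
Proof.
  intros Hr Hz. destruct (tikhonov_comparison n z r Hr Hz) as [d [q [_ [Eq [Hd [Hq Hb]]]]]].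
  exists q. split; [exact Eq|]. pose proof (Hapos n).
  apply Rmult_le_reg_l with (alpha n); [lra|]. rewrite Rmult_plus_distr_l.
  replace (alpha n * (delta n / alpha n)) with (delta n) by (field; lra). lra.
Qed.

Lemma residual_bound n z r : Rg z = Fin r -> K z = y ->
  exists d, Dsim (K (x n)) (yn n) = Fin d /\ d <= delta n + alpha n * r.
Proof.
  intros Hr Hz. destruct (tikhonov_comparison n z r Hr Hz) as [d [q [Ed [_ [Hd [Hq Hb]]]]]].
  exists d. split; [exact Ed|]. pose proof (Hapos n). nra.
Qed.

Lemma data_strong_cv : strong_cv yn y.
Proof.
  apply B3. intros eps He. destruct (Hdcv eps He) as [N HN]. exists N. intros n Hn.
  specialize (HN n Hn). pose proof (Hyn n). pose proof (Dnn y (yn n)). pose proof (Hdpos n).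
  destruct (Dsim y (yn n)) as [s|]; [|contradiction]. exists s. split; [reflexivity|].
  cbn [enonneg ele] in *. unfold Rdist in HN. rewrite Rminus_0_r in *.
  rewrite Rabs_right in HN by lra. rewrite Rabs_right by lra. lra.
Qed.

Hypothesis Hy : exists x0, efinite (Rg x0) /\ K x0 = y.

(** Part (a), for every subsequence: the regularizer stays bounded along the
    minimizers, so they lie in a weakly compact sublevel set. *)
Lemma minimizers_weak_subseq (tau : nat -> nat) :
  exists s xs, subseq_idx s /\ weak_cv (fun n => x (tau (s n))) xs.
Proof.
  destruct Hy as [x0 [Hx0f Hx0]]. destruct (Rg x0) as [r0|] eqn:Er0; [|contradiction].
  destruct (cv_bounded_above _ _ Hda) as [Bq HBq].
  apply (reg_bounded_weak_subseq E Dd psi c HD Hpsi_nonneg Hpsi_coer Hc (fun n => x (tau n)) (Bq + r0)).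
  intro n. destruct (reg_iterate_bound (tau n) x0 r0 Er0 Hx0) as [q [-> Hq]].
  simpl. specialize (HBq (tau n)). lra.
Qed.

Section WeakLimit.
Variables (tau : nat -> nat) (xs : X).
Hypothesis Htau : subseq_idx tau.
Hypothesis Hw : weak_cv (fun n => x (tau n)) xs.

(** A weak limit solves [K xs = y]: by (B2), [D(K xs, y)] is below the
    vanishing bound [delta_n + alpha_n R(x0)], hence zero, and (B1) applies. *)
Lemma weak_limit_solves : K xs = y.
Proof.
  destruct Hy as [x0 [Hx0f Hx0]]. destruct (Rg x0) as [r0|] eqn:Er0; [|contradiction].
  assert (Hdr : Un_cv (fun n => delta n + alpha n * r0) 0).
  { replace 0 with (0 + 0 * r0) by ring. apply CV_plus; [exact Hdcv|].
    apply CV_mult; [exact Hacv| apply cv_const]. }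
  pose proof (B2 _ _ (K xs) y (HK _ xs Hw) (Un_cv_subseq _ 0 tau Htau data_strong_cv)) as Hlsc.
  assert (Hsmall : forall r, 0 < r -> ~ elt (Fin r) (Dsim (K xs) y)).
  { intros r Hr Hel. destruct (eventually_and _ _ (Hlsc r Hel)
       (cv_eventually_lt _ _ r (Un_cv_subseq _ _ tau Htau Hdr) Hr)) as [N HN].
    destruct (HN N (le_n _)) as [H1 H2]. destruct (residual_bound (tau N) x0 r0 Er0 Hx0) as [d [Ed Hd]].
    rewrite Ed in H1. simpl in H1. lra. }
  apply B1. pose proof (Dnn (K xs) y) as Hn. destruct (Dsim (K xs) y) as [d0|].
  - cbn [enonneg ele] in Hn. destruct (Req_dec d0 0) as [->|Hne]; [reflexivity|].
    exfalso. apply (Hsmall (d0 / 2)); simpl; lra.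
  - exfalso. apply (Hsmall 1); simpl; auto; lra.
Qed.

(** A weak limit has regularizer below that of every solution, since
    [R(x_n) <= delta_n / alpha_n + R(z)] and [R] is weakly lsc. *)
Lemma weak_limit_minimal z r : Rg z = Fin r -> K z = y -> ele (Rg xs) (Fin r).
Proof.
  intros Hr Hz. apply NNPP. intro Hn. apply not_ele_elt in Hn.
  assert (Hr' : exists r', r < r' /\ elt (Fin r') (Rg xs)).
  { destruct (Rg xs) as [t|]; simpl in *.
    - exists ((r + t) / 2). split; lra.
    - exists (r + 1). split; auto; lra. }
  destruct Hr' as [r' [Hrr Hel]].
  destruct (eventually_and _ _ (reg_weak_lsc E Dd psi c HE HD Hpsi_lsc Hc _ _ Hw r' Hel)
       (cv_eventually_lt _ _ (r' - r) (Un_cv_subseq _ _ tau Htau Hda) ltac:(lra))) as [N HN].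
  destruct (HN N (le_n _)) as [H1 H2]. destruct (reg_iterate_bound (tau N) z r Hr Hz) as [q [Eq Hq]].
  rewrite Eq in H1. simpl in H1. lra.
Qed.

Lemma weak_limit_Rmin_solution : Rmin_solution K E Dd psi c y xs.
Proof.
  pose proof weak_limit_solves as Kxs. split; [|split; [exact Kxs|]].
  - destruct Hy as [x0 [Hx0f Hx0]]. destruct (Rg x0) as [r0|] eqn:Er0; [|contradiction].
    pose proof (weak_limit_minimal x0 r0 Er0 Hx0). destruct (Rg xs); simpl in *; auto.
  - intros z Hzf Hz. destruct (Rg z) as [r|] eqn:Er; [|contradiction].
    exact (weak_limit_minimal z r Er Hz).
Qed.

(** Part (c): lower semicontinuity from below, the bound
    [R(x_n) <= delta_n / alpha_n + R(xs)] from above. *)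
Lemma weak_limit_reg_cv : econv (fun n => Rg (x (tau n))) (Rg xs).
Proof.
  destruct weak_limit_Rmin_solution as [Hf [Kxs _]].
  destruct (Rg xs) as [t|] eqn:Et; [|contradiction]. simpl. intros eps He.
  destruct (eventually_and _ _
       (reg_weak_lsc E Dd psi c HE HD Hpsi_lsc Hc _ _ Hw (t - eps) ltac:(rewrite Et; simpl; lra))
       (cv_eventually_lt _ _ eps (Un_cv_subseq _ _ tau Htau Hda) He)) as [N HN].
  exists N. intros n Hn. destruct (HN n Hn) as [H1 H2].
  destruct (reg_iterate_bound (tau n) xs t Et Kxs) as [q [Eq Hq]].
  rewrite Eq in H1 |- *. simpl in H1. exists q. split; [reflexivity|]. apply Rabs_def1; lra.
Qed.

End WeakLimit.

(** Part (d): with a unique [R]-minimizing solution every subsequence has a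
    further subsequence converging weakly to it. *)
Lemma minimizers_weak_cv_unique xdd :
  (forall z, Rmin_solution K E Dd psi c y z -> z = xdd) -> weak_cv x xdd.
Proof.
  intro Huniq. apply weak_cv_subsubseq. intros tau Htau.
  destruct (minimizers_weak_subseq tau) as [s [xs [Hs Hws]]].
  exists s. split; [exact Hs|].
  rewrite <- (Huniq xs (weak_limit_Rmin_solution _ xs (subseq_comp _ _ Htau Hs) Hws)). exact Hws.
Qed.

End TikhonovConvergence.

Theorem mainTheorem7
  (X Y Xi : Hilbert) (K : X -> Y) (E : X -> Xi) (Dd : Xi -> X) (psi : Xi -> ereal)
  (c : R) (Dsim : Y -> Y -> ereal)
  (HK : weak_seq_cont K) (HE : weak_seq_cont E) (HD : weak_seq_cont Dd)
  (Hpsi_nonneg : forall xi, enonneg (psi xi))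
  (Hpsi_coer : coercive psi) (Hpsi_lsc : weak_seq_lsc psi)
  (Hc : c > 0)
  (HB : sim_measure K E Dd psi c Dsim)
  (y : Y) (Hy : exists x0, efinite (Reg E Dd psi c x0) /\ K x0 = y)
  (delta : nat -> R) (Hdpos : forall n, delta n > 0) (Hdcv : Un_cv delta 0)
  (yn : nat -> Y) (Hyn : forall n, ele (Dsim y (yn n)) (Fin (delta n)))
  (alpha : nat -> R) (Hapos : forall n, alpha n > 0) (Hacv : Un_cv alpha 0)
  (Hda : Un_cv (fun n => delta n / alpha n) 0)
  (x : nat -> X)
  (Hx : forall n z, ele (Tik K E Dd psi c Dsim (alpha n) (yn n) (x n))
                        (Tik K E Dd psi c Dsim (alpha n) (yn n) z)) :
  (* (a) *)
  (exists (tau : nat -> nat) (xs : X), subseq_idx tau /\ weak_cv (fun n => x (tau n)) xs)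
  /\ (* (b) *)
  (forall xs : X, (exists tau, subseq_idx tau /\ weak_cv (fun n => x (tau n)) xs) ->
     Rmin_solution K E Dd psi c y xs)
  /\ (* (c) *)
  (forall (tau : nat -> nat) (xs : X), subseq_idx tau -> weak_cv (fun n => x (tau n)) xs ->
     econv (fun n => Reg E Dd psi c (x (tau n))) (Reg E Dd psi c xs))
  /\ (* (d) *)
  (forall xdd : X, Rmin_solution K E Dd psi c y xdd ->
     (forall z, Rmin_solution K E Dd psi c y z -> z = xdd) ->
     weak_cv x xdd).
Proof.
  destruct HB as [Dnn [B1 [B2 [B3 _]]]].
  split; [|split; [|split]].
  - exact (minimizers_weak_subseq K E Dd psi c Dsim HD Hpsi_nonneg Hpsi_coer Hc Dnn
             y delta alpha yn x Hyn Hapos Hda Hx Hy (fun n => n)).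
  - intros xs [tau [Htau Hw]].
    exact (weak_limit_Rmin_solution K E Dd psi c Dsim HK HE HD Hpsi_nonneg Hpsi_lsc Hc
             Dnn B1 B2 B3 y delta alpha yn x Hdpos Hdcv Hyn Hapos Hacv Hda Hx Hy tau xs Htau Hw).
  - exact (weak_limit_reg_cv K E Dd psi c Dsim HK HE HD Hpsi_nonneg Hpsi_lsc Hc
             Dnn B1 B2 B3 y delta alpha yn x Hdpos Hdcv Hyn Hapos Hacv Hda Hx Hy).
  - intros xdd _.
    exact (minimizers_weak_cv_unique K E Dd psi c Dsim HK HE HD Hpsi_nonneg Hpsi_coer Hpsi_lsc Hc
             Dnn B1 B2 B3 y delta alpha yn x Hdpos Hdcv Hyn Hapos Hacv Hda Hx Hy xdd).
Qed.
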